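(* Let $n\ge 3$. There exists a vertex $w$ of $D_n$ of minimum degree $\delta(D_n)$ such that $\frac n2<w<n$.
   Context: $D_n$ is the graph with vertex set $\{1,\dots,n\}$ in which distinct $a,b$ are adjacent iff $\gcd(a,b)\mid n$ (the maximal Diophantine graph of order $n$; each vertex is identified with its label). $\delta(G)$ denotes the minimum degree of $G$. *)

From mathcomp Require Import all_boot.
Set Implicit Arguments. Unset Strict Implicit. Unset Printing Implicit Defensive.

(* Maximal Diophantine graph D_n: vertex set {1,...,n}, represented by
   'I_n where the ordinal i carries the label i.+1. *)
Definition label (n : nat) (i : 'I_n) : nat := i.+1.

Definition Dadj (n : nat) : rel 'I_n :=
  fun i j => (i != j) && (gcdn (label i) (label j) %| n).

Definition Ddeg (n : nat) (i : 'I_n) : nat := #|[set j | Dadj i j]|.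

(* degrees are <= n-1, so n is a neutral start value for n >= 1 *)
Definition Dmindeg (n : nat) : nat := \big[minn/n]_(i : 'I_n) Ddeg i.

From HB Require Import structures.
From mathcomp Require Import all_boot.
From mathcomp Require Import zify.

(* If a divides n then a is adjacent to every other vertex, so its degree is
   the maximum n - 1.  If a does not divide n, then for every multiple b of a
   we have gcd(a, c) | gcd(b, c), so every neighbour of b is a neighbour of a
   and deg b <= deg a.  Starting from a vertex a of minimum degree, the vertex
   n - 1 (when a | n) or the largest multiple of a below n (otherwise) is a
   vertex of minimum degree in the open interval (n/2, n). *)

HB.instance Definition _ := SemiGroup.isComLaw.Build nat minn minnA minnC.

Section DiophantineDegree.

Variable n : nat.
Implicit Types i j : 'I_n.

Lemma card_setC1_ord i : #|[set~ i]| = n.-1.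
Proof. by rewrite cardsC1 card_ord. Qed.

Lemma Ddeg_le_pred i : Ddeg i <= n.-1.
Proof.
rewrite -(card_setC1_ord i); apply: subset_leq_card.
by apply/subsetP => j; rewrite !inE /Dadj eq_sym => /andP[].
Qed.

Lemma Ddeg_dvd i : label i %| n -> Ddeg i = n.-1.
Proof.
move=> dvd_i_n; rewrite -(card_setC1_ord i); apply: eq_card => j.
rewrite !inE /Dadj eq_sym; case: (j == i) => //=.
exact: dvdn_trans (dvdn_gcdl _ _) dvd_i_n.
Qed.

Lemma Ddeg_multiple i j :
  label i %| label j -> ~~ (label i %| n) -> Ddeg j <= Ddeg i.
Proof.
move=> dvd_ij ndvd_i_n; apply: subset_leq_card; apply/subsetP => k.
rewrite !inE /Dadj => /andP[_ adj_jk]; apply/andP; split.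
  apply: contraNneq ndvd_i_n => eq_ik; move: adj_jk.
  by rewrite -eq_ik gcdnC (gcdn_idPl dvd_ij).
apply: dvdn_trans adj_jk; rewrite dvdn_gcd dvdn_gcdr andbT.
exact: dvdn_trans (dvdn_gcdl _ _) dvd_ij.
Qed.

Lemma Dmindeg_le i : Dmindeg n <= Ddeg i.
Proof. by rewrite /Dmindeg (bigD1 i) //= geq_minl. Qed.

Lemma Dmindeg_attained : 0 < n -> exists i : 'I_n, Ddeg i = Dmindeg n.
Proof.
move=> n_gt0.
have [j _ j_min] := arg_minnP (@Ddeg n) (erefl (predT (Ordinal n_gt0))).
exists j; apply/eqP; rewrite eqn_leq Dmindeg_le andbT /Dmindeg.
apply: (big_ind (fun x => Ddeg j <= x)).
- exact: leq_trans (Ddeg_le_pred j) (leq_pred n).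
- by move=> x y jx jy; rewrite leq_min jx jy.
- by move=> k _; exact: j_min.
Qed.

(* For a not dividing n, the largest multiple m of a with m < n satisfies
   m >= a and m > n - 1 - a, so 2 m >= n, and 2 m = n would force m = a = n/2. *)
Lemma exists_upper_half_le_Ddeg i :
  2 < n -> exists w : 'I_n, Ddeg w <= Ddeg i /\ n < 2 * label w /\ label w < n.
Proof.
move=> n_gt2; have pred2_lt : n.-2 < n by lia.
have [dvd_i_n | ndvd_i_n] := boolP (label i %| n).
  exists (Ordinal pred2_lt); rewrite (Ddeg_dvd _ dvd_i_n) Ddeg_le_pred /label /=.
  by split; lia.
set a := label i in ndvd_i_n *; have a_gt0 : 0 < a by [].
have a_lt_n : a < n.
  rewrite ltn_neqAle (ltn_ord i) andbT.
  by apply: contraNneq ndvd_i_n => ->; rewrite dvdnn.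
have two_a_neq_n : 2 * a != n.
  by apply: contraNneq ndvd_i_n => <-; rewrite dvdn_mull.
set m := n.-1 %/ a * a.
have m_gt_pred : n.-1 < m + a by rewrite -mulSnr ltn_ceil.
have m_le_pred : m <= n.-1 by rewrite leq_divM.
have a_le_m : a <= m by rewrite leq_pmull // divn_gt0 //; lia.
have m_lt : m.-1 < n by lia.
exists (Ordinal m_lt); rewrite /label /= prednK; last by lia.
split; last by lia.
apply: (Ddeg_multiple _ _ _ ndvd_i_n).
by rewrite /label /= prednK ?dvdn_mull //; lia.
Qed.

End DiophantineDegree.

Theorem mainTheorem16 (n : nat) (hn : 3 <= n) :
  exists w : 'I_n, Ddeg w = Dmindeg n /\ n < 2 * label w /\ label w < n.
Proof.
have [i deg_i] := Dmindeg_attained _ (ltnW (ltnW hn)).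
have [w [deg_w upper_half]] := exists_upper_half_le_Ddeg _ i hn.
exists w; split => //; apply/eqP; rewrite eqn_leq Dmindeg_le andbT -deg_i.
exact: deg_w.
Qed.
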